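(* If $U$ is a $d$-dimensional subspace of $W$, then $$\#\{T\in L(W,V):\mathfrak{I}(T)=U\}=q^{d^2}\prod_{i=d+1}^{k}(q^n-q^i).$$
   Context: Let $\mathbb{F}_q$ be the finite field with $q$ elements, $n\ge k$ positive integers, $V$ an $n$-dimensional $\mathbb{F}_q$-vector space and $W\subseteq V$ a $k$-dimensional subspace. $L(W,V)$ is the space of $\mathbb{F}_q$-linear maps $W\to V$. For $T\in L(W,V)$, $\mathfrak{I}(T)$ denotes the maximal $T$-invariant subspace contained in $W$, i.e. the largest subspace $U\subseteq W$ with $T(U)\subseteq U$. Empty products equal $1$. *)

(* Subspaces of V = 'rV[F]_n are represented, as in
   mxalgebra, by (row spaces of) matrices; L(W,V) is the set of linear maps
   from the set of vectors of W to V, encoded as finite functions. *)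
From HB Require Import structures.
From mathcomp Require Import all_boot all_algebra all_field.
Set Implicit Arguments. Unset Strict Implicit. Unset Printing Implicit Defensive.
Import GRing.Theory.
Local Open Scope ring_scope.

Definition subW (F : finFieldType) (n : nat) (W : 'M[F]_n) : finType :=
  {x : 'rV[F]_n | (x <= W)%MS}.

Definition is_linW (F : finFieldType) (n : nat) (W : 'M[F]_n)
  (T : {ffun subW W -> 'rV[F]_n}) : bool :=
  [forall a : F, forall x : subW W, forall y : subW W, forall z : subW W,
     (val z == a *: val x + val y) ==> (T z == a *: T x + T y)].

Definition LWV (F : finFieldType) (n : nat) (W : 'M[F]_n)
  : {set {ffun subW W -> 'rV[F]_n}} := [set T | is_linW T].

Definition Tinvariant (F : finFieldType) (n : nat) (W : 'M[F]_n)
  (T : {ffun subW W -> 'rV[F]_n}) (X : 'M[F]_n) : bool :=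
  (X <= W)%MS && [forall x : subW W, (val x <= X)%MS ==> (T x <= X)%MS].

(* I(T) = U : U is the largest T-invariant subspace contained in W *)
Definition is_max_inv (F : finFieldType) (n : nat) (W : 'M[F]_n)
  (T : {ffun subW W -> 'rV[F]_n}) (U : 'M[F]_n) : bool :=
  Tinvariant T U && [forall X : 'M[F]_n, Tinvariant T X ==> (X <= U)%MS].

From HB Require Import structures.
From mathcomp Require Import all_boot all_algebra all_field perm.
Set Implicit Arguments. Unset Strict Implicit. Unset Printing Implicit Defensive.
Import GRing.Theory.
Local Open Scope ring_scope.

(* Fix a basis B of W and describe T by the matrix M whose rows are the images
   of the basis vectors; a subspace of W with coordinate rows Y is T-invariant
   iff Y M <= Y B.  The number of M with I(T) = U is computed by induction on
   k = dim W.  If U = W these are the M with rows in W: q^(k^2) of them.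
   Otherwise choose the basis e, w_2, ..., w_k so that U lies in
   W' = <w_2, ..., w_k>.  Then I(T) = U forces I(T|W') = U, and given T|W'
   exactly q^k of the q^n choices of v = T e are bad (give I(T) <> U).

   This last count is by induction on n.  A bad v lies in W + T(W'), so it is
   w + T w' for pairs (w', w) in W' x W; count the pairs giving a bad v in two
   ways.  Each such v comes from q^h pairs, h = dim {w' in W' | T w' in W}.
   For fixed w', the bad w are the bad extensions of a problem of the same
   shape inside the k-dimensional space W, hence q^(h+1) of them.  Thus
   q^h #bad = q^(k-1) q^(h+1). *)

Section Counting.
Variables T1 T2 : finType.

Lemma card_set_bij (f : T1 -> T2) (g : T2 -> T1) (P : pred T2) :
  cancel f g -> cancel g f -> #|[set x | P (f x)]| = #|[set y | P y]|.
Proof.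
move=> fK gK; rewrite -(card_imset _ (can_inj fK)) (can2_imset_pre _ fK gK).
by apply: eq_card => y; rewrite !inE gK.
Qed.

Lemma card_pairs (P : pred (T1 * T2)) :
  #|[set p | P p]| = (\sum_(a : T1) #|[set b | P (a, b)]|)%N.
Proof.
rewrite (eq_bigr (fun a => \sum_(b | P (a, b)) 1)%N) => [|a _]; last first.
  by rewrite -sum1_card; apply: eq_bigl => b; rewrite inE.
by rewrite pair_big_dep -sum1_card; apply: eq_bigl => -[a b]; rewrite inE.
Qed.

Lemma card_preim_uniform (f : T1 -> T2) (P : pred T2) (c : nat) :
  (forall y, P y -> #|[set x | f x == y]| = c) ->
  #|[set x | P (f x)]| = (c * #|[set y | P y]|)%N.
Proof.
move=> fibre_c; rewrite -sum1_card (partition_big f P) => [|x]; last by rewrite inE.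
rewrite mulnC -sum_nat_cond_const; apply: eq_bigr => y Py.
rewrite -(fibre_c y Py) -sum1_card; apply: eq_bigl => x; rewrite !inE.
by case: eqP => [-> | _]; rewrite ?Py ?andbF.
Qed.

End Counting.

Section LinearAlgebra.
Variable F : fieldType.

Lemma submx_row_mx0 a b p r (X : 'M[F]_(p, b)) (Y : 'M_(r, b)) :
  (row_mx (0 : 'M_(p, a)) X <= row_mx (0 : 'M_(r, a)) Y)%MS = (X <= Y)%MS.
Proof.
have E s (Z : 'M[F]_(s, b)) : row_mx (0 : 'M_(s, a)) Z = Z *m row_mx 0 1%:M.
  by rewrite mul_mx_row mulmx0 mulmx1.
by rewrite E (E _ Y) submxMfree // /row_free rank_row_0mx mxrank1.
Qed.

Lemma row_free_col_mxd m1 m2 n (A : 'M[F]_(m1, n)) (B : 'M_(m2, n)) :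
  row_free (col_mx A B) -> row_free B.
Proof.
move=> freeAB; have -> : B = row_mx 0 1%:M *m col_mx A B.
  by rewrite mul_row_col mul0mx mul1mx add0r.
by rewrite /row_free mxrankMfree // rank_row_0mx mxrank1.
Qed.

Lemma submx_kermx_coker j j' m p (S : 'M[F]_(j', m)) (B : 'M_(j, m)) (h : 'M_(p, j')) :
  (h <= kermx (S *m cokermx B))%MS = (h *m S <= B)%MS.
Proof. by rewrite sub_kermx submxE mulmxA. Qed.

Lemma exists_unitmx_lsubmx0 j r (U : 'M[F]_(r, 1 + j)) :
  (\rank U < 1 + j)%N -> exists2 Q : 'M_(1 + j), Q \in unitmx & lsubmx (U *m Q) = 0.
Proof.
move=> ltUj; have unitR : row_ebase U \in unitmx by exact: row_ebase_unit.
exists (invmx (row_ebase U) *m tperm_mx 0 ord_max).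
  by rewrite unitmx_mul unitmx_inv unitR unitmx_perm.
rewrite mulmxA -xcolE -{1}(mulmx_ebase U) (mulmxK unitR).
apply/matrixP => i k; rewrite !mxE.
have -> : tperm 0 ord_max (lshift j k) = ord_max.
  by rewrite (ord1 k) (_ : lshift j 0 = 0) ?tpermL //; apply: val_inj.
rewrite big1 // => l _; rewrite mxE.
by case: eqP => [-> | _]; rewrite ?mulr0 //= ltnNge -ltnS ltUj mulr0.
Qed.

(* Rows of [B] are a basis of a subspace W of F^m and row i of [M] is the image
   of the i-th basis vector under a map T : W -> F^m; the subspace of W with
   coordinate rows [Y] is then T-invariant iff [Y *m M <= Y *m B]. *)
Definition mxinvariant j m p (B M : 'M[F]_(j, m)) (Y : 'M_(p, j)) : bool :=
  (Y *m M <= Y *m B)%MS.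

Lemma eqmx_mxinvariant j m p p' (B M : 'M[F]_(j, m)) (Y : 'M_(p, j)) (Y' : 'M_(p', j)) :
  (Y :=: Y')%MS -> mxinvariant B M Y = mxinvariant B M Y'.
Proof. by move=> eqYY'; rewrite /mxinvariant (eqmxMr M eqYY') (eqmxMr B eqYY'). Qed.

Lemma mxinvariant_mulmxr j m m' p (B M : 'M[F]_(j, m)) (C : 'M_(m, m')) (Y : 'M_(p, j)) :
  row_free C -> mxinvariant (B *m C) (M *m C) Y = mxinvariant B M Y.
Proof. by move=> freeC; rewrite /mxinvariant !mulmxA submxMfree. Qed.

Lemma mxinvariant_transfer j m j' (B M : 'M[F]_(j, m)) (B' M' : 'M_(j', j)) :
  row_free B -> B' *m M = M' *m B ->
  forall p (Z : 'M_(p, j')), mxinvariant B M (Z *m B') = mxinvariant B' M' Z.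
Proof. by move=> freeB eBM p Z; rewrite /mxinvariant -!mulmxA eBM !mulmxA submxMfree. Qed.

Lemma mxinvariant_row0 j m p (be v : 'rV[F]_m) (BH S : 'M_(j, m)) (Y : 'M_(p, j)) :
  mxinvariant (col_mx be BH) (col_mx v S) (row_mx 0 Y) = mxinvariant BH S Y.
Proof. by rewrite /mxinvariant !mul_row_col !mul0mx !add0r. Qed.

End LinearAlgebra.

Section MaxInvariant.
Variable F : finFieldType.

Lemma card_submx p m r (A : 'M[F]_(r, m)) :
  #|[set x : 'M_(p, m) | (x <= A)%MS]| = (#|F| ^ (p * \rank A))%N.
Proof.
rewrite -card_mx -cardsT -(card_imset _ (row_free_inj (row_base_free A))).
apply: eq_card => x; rewrite !inE; apply/idP/imsetP => [xA | [c _ ->]].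
  by exists (x *m pinvmx (row_base A)); rewrite ?inE // mulmxKpV ?eq_row_base.
by rewrite -(eq_row_base A) submxMl.
Qed.

Definition max_mxinvariant j m r (B M : 'M[F]_(j, m)) (U : 'M_(r, j)) : bool :=
  mxinvariant B M U && [forall Y : 'M_j, mxinvariant B M Y ==> (Y <= U)%MS].

Lemma max_mxinvariantP j m r (B M : 'M[F]_(j, m)) (U : 'M_(r, j)) :
  reflect (mxinvariant B M U /\
           forall p (Y : 'M_(p, j)), mxinvariant B M Y -> (Y <= U)%MS)
          (max_mxinvariant B M U).
Proof.
apply: (iffP andP) => -[invU maxU]; split=> //; last first.
  by apply/forallP => Y; apply/implyP; apply: maxU.
move=> p Y invY; rewrite -(genmxE Y); apply: (implyP (forallP maxU _)).
by rewrite (eqmx_mxinvariant _ _ (genmxE Y)).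
Qed.

(* [B'] is a family of vectors written in the coordinates of [B], and [M']
   describes the map on them; when every invariant subspace lies in their span,
   the maximal invariant subspace may be computed in the coordinates of [B']. *)
Lemma max_mxinvariant_transfer j m j' r (B M : 'M[F]_(j, m)) (B' M' : 'M_(j', j))
    (Z : 'M_(r, j')) :
  row_free B -> row_free B' -> B' *m M = M' *m B ->
  (forall p (Y : 'M_(p, j)), mxinvariant B M Y -> (Y <= B')%MS) ->
  max_mxinvariant B M (Z *m B') = max_mxinvariant B' M' Z.
Proof.
move=> freeB freeB' eBM inB'; have transfer := mxinvariant_transfer freeB eBM.
apply/max_mxinvariantP/max_mxinvariantP => -[invZ maxZ]; split.
- by rewrite -transfer.
- by move=> p Y; rewrite -transfer => /maxZ; rewrite submxMfree.
- by rewrite transfer.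
move=> p Y invY; have /submxP [X eY] := inB' _ _ invY.
by rewrite eY submxMr // maxZ // -transfer -eY.
Qed.

Lemma max_mxinvariant_mulmx j m r (Q : 'M[F]_j) (B M : 'M_(j, m)) (U : 'M_(r, j)) :
  Q \in unitmx -> max_mxinvariant (Q *m B) (Q *m M) U = max_mxinvariant B M (U *m Q).
Proof.
move=> unitQ; have freeQ : row_free Q by rewrite row_free_unit.
have QE p (Y : 'M_(p, j)) : mxinvariant (Q *m B) (Q *m M) Y = mxinvariant B M (Y *m Q).
  by rewrite /mxinvariant !mulmxA.
apply/max_mxinvariantP/max_mxinvariantP => -[invU maxU]; split.
- by rewrite -QE.
- move=> p Y invY; rewrite -[Y](mulmxKV unitQ) submxMr // maxU //.
  by rewrite QE mulmxKV.
- by rewrite QE.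
by move=> p Y; rewrite QE => /maxU; rewrite submxMfree.
Qed.

Lemma max_mxinvariant_row_full j m r (B M : 'M[F]_(j, m)) (U : 'M_(r, j)) :
  row_full U -> max_mxinvariant B M U = (M <= B)%MS.
Proof.
move=> fullU; rewrite /max_mxinvariant /mxinvariant (eqmxMfull M fullU).
rewrite (eqmxMfull B fullU); case: (M <= B)%MS => //=.
by apply/forallP => Y; rewrite (submx_full _ fullU) implybT.
Qed.

Lemma row_full_max_mxinvariant j m r (B M : 'M[F]_(j, m)) (U : 'M_(r, j)) :
  row_full B -> max_mxinvariant B M U -> row_full U.
Proof.
move=> fullB /max_mxinvariantP [_ maxU].
by rewrite -sub1mx maxU // /mxinvariant !mul1mx submx_full.
Qed.

Lemma card_max_mxinvariant_full j m r (B : 'M[F]_(j, m)) (U : 'M_(r, j)) :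
  row_free B -> row_full U ->
  #|[set M | max_mxinvariant B M U]| = (#|F| ^ (j * j))%N.
Proof.
move=> freeB fullU; rewrite -[X in (j * X)%N](eqP freeB) -card_submx.
by apply: eq_card => M; rewrite !inE max_mxinvariant_row_full.
Qed.

Lemma max_mxinvariant_restrict j m r (be v : 'rV[F]_m) (BH S : 'M_(j, m))
    (U : 'M_(r, j)) :
  max_mxinvariant (col_mx be BH) (col_mx v S) (row_mx 0 U) -> max_mxinvariant BH S U.
Proof.
move=> /max_mxinvariantP [invU maxU]; apply/max_mxinvariantP.
split=> [|p Y invY]; first by rewrite -(mxinvariant_row0 be v).
by rewrite -(submx_row_mx0 1) maxU // mxinvariant_row0.
Qed.

End MaxInvariant.

Section Extension.
Variables (F : finFieldType) (j m r : nat).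
Variables (be : 'rV[F]_m) (BH S : 'M[F]_(j, m)) (U : 'M[F]_(r, j)).
Local Notation B := (col_mx be BH).
Hypotheses (freeB : row_free B) (maxU : max_mxinvariant BH S U).

Let invU : mxinvariant BH S U. Proof. by case/andP: maxU. Qed.

Lemma max_mxinvariant_ext_notin v :
  ~~ (v <= B + S)%MS -> max_mxinvariant B (col_mx v S) (row_mx 0 U).
Proof.
move=> v_out; apply/max_mxinvariantP.
split=> [|p Y invY]; first by rewrite mxinvariant_row0.
have Yv : (lsubmx Y *m v <= B + S)%MS.
  have -> : lsubmx Y *m v = Y *m col_mx v S - rsubmx Y *m S.
    by rewrite -[X in X *m col_mx v S]hsubmxK mul_row_col addrK.
  rewrite addmx_sub ?eqmx_opp //.
    exact: submx_trans invY (submx_trans (submxMl _ _) (addsmxSl _ _)).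
  exact: submx_trans (submxMl _ _) (addsmxSr _ _).
have Yl0 : lsubmx Y = 0.
  apply/matrixP => i k; rewrite [RHS]mxE (ord1 k); apply: contraNeq v_out => Yi0.
  have -> : v = (lsubmx Y i 0)^-1 *: row i (lsubmx Y *m v).
    rewrite row_mul (mx11_scalar (row i _)) mul_scalar_mx scalerA.
    by rewrite [row i _ 0 0]mxE mulVf ?scale1r.
  by rewrite scalemx_sub // (submx_trans (row_sub _ _) Yv).
move: invY; rewrite -[Y]hsubmxK Yl0 submx_row_mx0 mxinvariant_row0.
by case/max_mxinvariantP: maxU => _; apply.
Qed.

Lemma card_ext_fibre v : (v <= B + S)%MS ->
  #|[set p : 'rV_j * 'rV_(1 + j) | p.2 *m B + p.1 *m S == v]| =
  (#|F| ^ \rank (kermx (S *m cokermx B)))%N.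
Proof.
case/sub_addsmxP => -[a0 b0] /= ev; set H := kermx _.
pose g (h : 'rV_j) := (b0 + h, (v - (b0 + h) *m S) *m pinvmx B).
have g_inj : injective g by move=> h h' [/addrI].
rewrite -[in RHS](mul1n (\rank H)) -card_submx -(card_imset _ g_inj).
apply: eq_card => -[b a]; rewrite !inE /=; apply/eqP/imsetP => [eab | [h]].
  exists (b - b0).
    rewrite inE submx_kermx_coker mulmxBl -[b *m S](addKr (a *m B)) eab ev.
    by rewrite addrA addrK addrC -mulmxBl submxMl.
  rewrite /g (addrC b0) subrK -eab addrK mulmxKp //.
rewrite inE submx_kermx_coker => hS [-> ->].
have : (v - (b0 + h) *m S <= B)%MS.
  by rewrite ev mulmxDl opprD addrA addrK addmx_sub ?submxMl // eqmx_opp.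
by move/mulmxKpV ->; rewrite subrK.
Qed.

(* For v = a B + b S, every invariant subspace lies in the span of the rows of
   [B'] (written in the coordinates of [B]), on which T acts by [col_mx a S'].
   This is an extension problem of the same shape, in ambient dimension 1 + j. *)
Section Reduction.
Variable b : 'rV[F]_j.
Local Notation H := (kermx (S *m cokermx B)).
Local Notation Hb := (row_base H).
Local Notation B' :=
  (col_mx (row_mx (1%:M : 'M_1) (- b)) (row_mx (0 : 'M_(\rank H, 1)) Hb)).
Local Notation S' := (Hb *m S *m pinvmx B).
Local Notation U' := (U *m pinvmx Hb).

Let S'E : S' *m B = Hb *m S.
Proof. by rewrite mulmxKpV // -submx_kermx_coker eq_row_base. Qed.

Let U'E : U' *m Hb = U.
Proof.
rewrite mulmxKpV // eq_row_base submx_kermx_coker (submx_trans invU) //.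
by rewrite (submx_trans (submxMl _ _)) // -addsmxE addsmxSr.
Qed.

Lemma row_free_reduced : row_free B'.
Proof.
apply: inj_row_free => x; rewrite -[x]hsubmxK mul_row_col !mul_mx_row.
rewrite mulmx1 mulmx0 add_row_mx addr0 -row_mx0 => /eq_row_mx [-> /eqP].
by rewrite mul0mx add0r mulmx_free_eq0 ?row_base_free // => /eqP ->; rewrite row_mx0.
Qed.

Lemma max_mxinvariant_reduced_restr : max_mxinvariant (row_mx 0 Hb) S' U'.
Proof.
have transfer p (Z : 'M_(p, \rank H)) :
    mxinvariant (row_mx 0 Hb) S' Z = mxinvariant BH S (Z *m Hb).
  rewrite -(mxinvariant_mulmxr _ _ _ freeB) S'E mul_row_col mul0mx add0r.
  by rewrite /mxinvariant !mulmxA.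
case/max_mxinvariantP: maxU => _ maxU'; apply/max_mxinvariantP.
split=> [|p Z]; first by rewrite transfer U'E.
by rewrite transfer => /maxU'; rewrite -{1}U'E submxMfree ?row_base_free.
Qed.

Lemma max_mxinvariant_reduced a :
  max_mxinvariant B (col_mx (a *m B + b *m S) S) (row_mx 0 U) =
  max_mxinvariant B' (col_mx a S') (row_mx 0 U').
Proof.
set v := a *m B + b *m S.
have eBM : B' *m col_mx v S = col_mx a S' *m B.
  by rewrite !mul_col_mx !mul_row_col mul1mx mul0mx add0r mulNmx S'E addrK.
have inB' p (Y : 'M_(p, 1 + j)) : mxinvariant B (col_mx v S) Y -> (Y <= B')%MS.
  rewrite -[Y]hsubmxK; set t := lsubmx Y; set y := rsubmx Y => invY.
  have : ((t *m b + y) *m S <= B)%MS.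
    have -> : (t *m b + y) *m S = row_mx t y *m col_mx v S - t *m a *m B.
      apply/eqP; rewrite eq_sym subr_eq mul_row_col mulmxDr !mulmxA mulmxDl.
      by rewrite [_ + t *m a *m B]addrC !addrA.
    by rewrite addmx_sub ?eqmx_opp ?submxMl // (submx_trans invY) ?submxMl.
  rewrite -submx_kermx_coker -(eq_row_base (kermx _)) => /submxP [z ez].
  apply/submxP; exists (row_mx t z).
  by rewrite mul_row_col !mul_mx_row mulmx1 mulmx0 add_row_mx addr0 -ez mulmxN addKr.
have -> : row_mx 0 U = row_mx 0 U' *m B'.
  by rewrite mul_row_col mul0mx add0r mul_mx_row mulmx0 U'E.
exact: max_mxinvariant_transfer freeB row_free_reduced eBM inB'.
Qed.

End Reduction.
End Extension.

Section MaxInvariantCount.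
Variable F : finFieldType.

Let q_gt0 : (0 < #|F|)%N. Proof. by apply/card_gt0P; exists 0. Qed.

Lemma card_bad_ext m : forall j (be : 'rV[F]_m) (BH S : 'M_(j, m)) r (U : 'M_(r, j)),
  row_free (col_mx be BH) -> max_mxinvariant BH S U ->
  #|[set v | ~~ max_mxinvariant (col_mx be BH) (col_mx v S) (row_mx 0 U)]| =
  (#|F| ^ j.+1)%N.
Proof.
elim/ltn_ind: m => m IH j be BH S r U freeB maxU.
set B := col_mx be BH; set H := kermx (S *m cokermx B).
pose bad v := ~~ max_mxinvariant B (col_mx v S) (row_mx 0 U).
have [ltjm | lemj] := ltnP j.+1 m; last first.
  have em : m = j.+1.
    by apply/eqP; rewrite eqn_leq lemj -[j.+1](eqP freeB) rank_leq_col.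
  have fullB : row_full B by rewrite /row_full (eqP freeB) em.
  have all_bad v : bad v.
    have ltUj : (\rank U < j.+1)%N by rewrite ltnS rank_leq_col.
    apply/negP => /(row_full_max_mxinvariant fullB).
    by rewrite /row_full rank_row_0mx ltn_eqF.
  transitivity #|{: 'rV[F]_m}|; last by rewrite card_mx mul1n em.
  by apply: eq_card => v; rewrite !inE; apply: all_bad.
have by_v : #|[set p | bad (p.2 *m B + p.1 *m S)]| =
            (#|F| ^ \rank H * #|[set v | bad v]|)%N.
  pose f (p : 'rV_j * 'rV_(1 + j)) := p.2 *m B + p.1 *m S.
  apply: (@card_preim_uniform _ _ f bad).
  move=> v bad_v; apply: card_ext_fibre => //; move: bad_v; apply: contraR.
  exact: max_mxinvariant_ext_notin.
have by_b : #|[set p | bad (p.2 *m B + p.1 *m S)]| =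
            (#|F| ^ j * #|F| ^ (\rank H).+1)%N.
  rewrite card_pairs (eq_bigr (fun=> #|F| ^ (\rank H).+1)%N) => [|b _].
    by rewrite sum_nat_const card_mx mul1n.
  rewrite -(IH _ ltjm _ _ _ _ _ _ (row_free_reduced be BH S b)
                 (max_mxinvariant_reduced_restr freeB maxU)).
  by apply: eq_card => a; rewrite !inE /bad max_mxinvariant_reduced.
have qH_gt0 : (0 < #|F| ^ \rank H)%N by rewrite expn_gt0 q_gt0.
apply/eqP; rewrite -(eqn_pmul2l qH_gt0) -by_v by_b.
by rewrite -!expnD !addnS addnC.
Qed.

Lemma card_max_mxinvariant_ext j m r (be : 'rV[F]_m) (BH : 'M_(j, m)) (U : 'M_(r, j)) :
  row_free (col_mx be BH) ->
  #|[set M | max_mxinvariant (col_mx be BH) M (row_mx 0 U)]| =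
  (#|[set S | max_mxinvariant BH S U]| * (#|F| ^ m - #|F| ^ j.+1))%N.
Proof.
move=> freeB; pose P (p : 'M_(j, m) * 'rV_m) :=
  max_mxinvariant (col_mx be BH) (col_mx p.2 p.1) (row_mx 0 U).
rewrite (_ : [set M | _] = [set M | P (dsubmx M, usubmx M)]); last first.
  by apply/setP => M; rewrite !inE /P /= vsubmxK.
rewrite (@card_set_bij _ _ _ (fun p => col_mx p.2 p.1)) => [|M|[S v]]; first last.
- by rewrite col_mxKu col_mxKd.
- by rewrite /= vsubmxK.
rewrite card_pairs -sum_nat_cond_const [RHS]big_mkcond; apply: eq_bigr => S _.
case: ifP => maxS; last first.
  apply: eq_card0 => v; rewrite inE; apply/negP => /max_mxinvariant_restrict.
  by rewrite maxS.
have bad : #|~: [set v : 'rV[F]_m | P (S, v)]| = (#|F| ^ j.+1)%N.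
  by rewrite -(card_bad_ext freeB maxS); apply: eq_card => v; rewrite !inE.
by have := cardsC [set v | P (S, v)]; rewrite card_mx mul1n bad => <-; rewrite addnK.
Qed.

Theorem card_max_mxinvariant j : forall m (B : 'M[F]_(j, m)) r (U : 'M_(r, j)),
  row_free B ->
  #|[set M | max_mxinvariant B M U]| =
  (#|F| ^ (\rank U * \rank U) *
   \prod_((\rank U).+1 <= i < j.+1) (#|F| ^ m - #|F| ^ i))%N.
Proof.
elim: j => [|j IH] m B r U freeB; have [fullU | notfullU] := boolP (row_full U).
1,3: by rewrite card_max_mxinvariant_full // (eqP fullU) big_geq ?muln1.
  by rewrite /row_full eqn_leq rank_leq_col in notfullU.
have ltUj : (\rank U < 1 + j)%N by rewrite ltn_neqAle notfullU rank_leq_col.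
have [Q unitQ UQ0] := exists_unitmx_lsubmx0 ltUj.
set UQ := U *m Q : 'M_(r, 1 + j); set U' := rsubmx UQ.
have eUQ : UQ = row_mx 0 U' by rewrite -[UQ]hsubmxK UQ0.
have rankU' : \rank U' = \rank U.
  by rewrite -(rank_row_0mx 1) -eUQ mxrankMfree // row_free_unit.
set B2 := invmx Q *m B : 'M_(1 + j, m).
have freeB2 : row_free (col_mx (usubmx B2) (dsubmx B2)).
  by rewrite vsubmxK /row_free eqmxMfull ?row_full_unit ?unitmx_inv.
rewrite (_ : [set M | _] = [set M | max_mxinvariant B2 (invmx Q *m M) UQ]); last first.
  by apply/setP => M; rewrite !inE max_mxinvariant_mulmx ?unitmx_inv // mulmxK.
rewrite (card_set_bij (fun M => max_mxinvariant B2 M UQ) (mulKVmx unitQ) (mulKmx unitQ)).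
rewrite eUQ -[B2]vsubmxK card_max_mxinvariant_ext // IH ?(row_free_col_mxd freeB2) //.
by rewrite rankU' [in RHS]big_nat_recr //= mulnA.
Qed.

End MaxInvariantCount.

Section LinearMaps.
Variables (F : finFieldType) (n : nat) (W : 'M[F]_n).
Local Notation B := (row_base W).

(* Junk value 0 outside W. *)
Definition in_subW (x : 'rV[F]_n) : subW W :=
  insubd (exist (fun y => (y <= W)%MS) 0 (sub0mx 1 W)) x.

Lemma val_in_subW x : (x <= W)%MS -> val (in_subW x) = x.
Proof. by move=> xW; rewrite /in_subW insubdK. Qed.

Lemma in_subWK : cancel val in_subW.
Proof. by move=> x; rewrite /in_subW valKd. Qed.

Lemma row_base_row_sub i : (row i B <= W)%MS.
Proof. by rewrite -(eq_row_base W) row_sub. Qed.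

Definition lin_of_mx (M : 'M[F]_(\rank W, n)) : {ffun subW W -> 'rV[F]_n} :=
  [ffun x => val x *m pinvmx B *m M].

Definition mx_of_lin (T : {ffun subW W -> 'rV[F]_n}) : 'M[F]_(\rank W, n) :=
  \matrix_i T (in_subW (row i B)).

Lemma lin_of_mx_LWV M : lin_of_mx M \in LWV W.
Proof.
rewrite inE; apply/forallP => a; apply/forallP => x; apply/forallP => y.
apply/forallP => z; apply/implyP => /eqP ez.
by rewrite !ffunE ez !mulmxDl -!scalemxAl.
Qed.

Lemma lin_of_mx_inj : injective lin_of_mx.
Proof.
move=> M M' eMM'; apply/row_matrixP => i.
have := congr1 (fun T : {ffun subW W -> 'rV[F]_n} => T (in_subW (row i B))) eMM'.
rewrite /= !ffunE val_in_subW ?row_base_row_sub //.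
by rewrite -!row_mul mulmxVp ?row_base_free // !mul1mx.
Qed.

Section LinearMap.
Variable T : {ffun subW W -> 'rV[F]_n}.
Hypothesis linT : T \in LWV W.

Lemma LWV_in_subW a (u w : 'rV[F]_n) : (u <= W)%MS -> (w <= W)%MS ->
  T (in_subW (a *: u + w)) = a *: T (in_subW u) + T (in_subW w).
Proof.
move=> uW wW; have uwW : ((a *: u + w)%R <= W)%MS by rewrite addmx_sub ?scalemx_sub.
move: linT; rewrite inE => /forallP /(_ a) /forallP /(_ (in_subW u)).
move=> /forallP /(_ (in_subW w)) /forallP /(_ (in_subW (a *: u + w))) /implyP.
by rewrite !val_in_subW // eqxx => /(_ isT) /eqP.
Qed.

Lemma LWV_in_subW0 : T (in_subW 0) = 0.
Proof.
have := LWV_in_subW 1 (sub0mx 1 W) (sub0mx 1 W).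
by rewrite scaler0 addr0 scale1r -{1}[T (in_subW 0)]addr0 => /addrI <-.
Qed.

Lemma LWV_row_base (c : 'rV_(\rank W)) : T (in_subW (c *m B)) = c *m mx_of_lin T.
Proof.
pose K (x y : 'rV[F]_n) := (x <= W)%MS /\ T (in_subW x) = y.
rewrite !mulmx_sum_row; suff [] : K (\sum_i c 0 i *: row i B)
                                    (\sum_i c 0 i *: row i (mx_of_lin T)) by [].
apply: (big_rec2 K) => [|i x y _ [xW <-]]; first by rewrite /K sub0mx LWV_in_subW0.
split; first by rewrite addmx_sub ?scalemx_sub ?row_base_row_sub.
by rewrite LWV_in_subW ?row_base_row_sub // rowK.
Qed.

Lemma mx_of_linK : lin_of_mx (mx_of_lin T) = T.
Proof.
apply/ffunP => x; rewrite ffunE -LWV_row_base mulmxKpV ?in_subWK //.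
by rewrite eq_row_base (valP x).
Qed.

End LinearMap.

Lemma Tinvariant_lin_of_mx M (X : 'M[F]_n) :
  Tinvariant (lin_of_mx M) X = (X <= W)%MS && mxinvariant B M (X *m pinvmx B).
Proof.
rewrite /Tinvariant; case XW: (X <= W)%MS => //=.
have XB : X *m pinvmx B *m B = X by rewrite mulmxKpV // eq_row_base.
apply/forallP/idP => [invX | invX x].
  rewrite /mxinvariant XB; apply/row_subP => i; rewrite !row_mul.
  have iW : (row i X <= W)%MS := submx_trans (row_sub i X) XW.
  have := implyP (invX (in_subW (row i X))).
  by rewrite val_in_subW // row_sub ffunE val_in_subW // => /(_ isT).
apply/implyP => /submxP [c ec]; rewrite ffunE (_ : val x = c *m X) //.
rewrite -(mulmxA c X) -(mulmxA c) (submx_trans (submxMl _ _)) //.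
by rewrite (submx_trans invX) ?XB.
Qed.

Lemma is_max_inv_lin_of_mx M (U : 'M[F]_n) : (U <= W)%MS ->
  is_max_inv (lin_of_mx M) U = max_mxinvariant B M (U *m pinvmx B).
Proof.
move=> UW; rewrite /is_max_inv Tinvariant_lin_of_mx UW /=.
have UB : U *m pinvmx B *m B = U by rewrite mulmxKpV // eq_row_base.
apply/andP/max_mxinvariantP => -[invU maxU]; split=> //.
  move=> p Y invY; have := implyP (forallP maxU <<Y *m B>>%MS).
  rewrite Tinvariant_lin_of_mx genmxE (submx_trans (submxMl _ _)) ?eq_row_base //.
  rewrite (eqmx_mxinvariant _ _ (eqmxMr _ (genmxE _))) -mulmxA mulmxVp ?row_base_free //.
  by rewrite mulmx1 invY genmxE -{1}UB submxMfree ?row_base_free //; apply.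
apply/forallP => X; apply/implyP; rewrite Tinvariant_lin_of_mx => /andP [XW /maxU].
by move/(submxMr B); rewrite UB mulmxKpV // eq_row_base.
Qed.

Lemma card_max_inv_mx (U : 'M[F]_n) : (U <= W)%MS ->
  #|[set T in LWV W | is_max_inv T U]| =
  #|[set M | max_mxinvariant B M (U *m pinvmx B)]|.
Proof.
move=> UW; rewrite -(card_imset _ lin_of_mx_inj); apply: eq_card => T.
rewrite [in LHS]inE; apply/andP/imsetP => [[linT maxT] | [M]].
  exists (mx_of_lin T); last by rewrite mx_of_linK.
  by rewrite inE -is_max_inv_lin_of_mx ?mx_of_linK.
by rewrite inE => maxM ->; rewrite lin_of_mx_LWV is_max_inv_lin_of_mx.
Qed.

End LinearMaps.

Unset Implicit Arguments.

Theorem theorem3 (F : finFieldType) (n k d : nat) (W U : 'M[F]_n)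
  (hW : \rank W = k) (hUW : (U <= W)%MS) (hU : \rank U = d) :
  #|[set T in LWV W | is_max_inv T U]| =
  (#|F| ^ (d * d) * \prod_(d.+1 <= i < k.+1) (#|F| ^ n - #|F| ^ i))%N.
Proof.
have rankU : \rank (U *m pinvmx (row_base W)) = d.
  by rewrite -(mxrankMfree _ (row_base_free W)) mulmxKpV ?eq_row_base.
by rewrite card_max_inv_mx // card_max_mxinvariant ?row_base_free // rankU hW.
Qed.
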